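(* Let $H=(U,(A_1,\dots,A_m))$ be a harmonic set system and suppose there exist $i<j$ with $A_i=A_j$. Then $A_1=A_2=\cdots=A_m$, or $(m,i,j)=(3,1,3)$.
   Context: For $I\subseteq[m]$, $H_I=\bigcap_{i\in I}A_i$ ($=U$ if $I=\emptyset$). The run decomposition of a finite set $I$ of positive integers is the partition of sizes, in nonincreasing order, of the maximal runs of consecutive integers in $I$. $H$ is harmonic if $|H_I|=|H_J|$ whenever $I,J\subseteq[m]$ have the same run decomposition. *)

From mathcomp Require Import all_boot.
Set Implicit Arguments. Unset Strict Implicit. Unset Printing Implicit Defensive.

(* A set system H = (U, (A_1,...,A_m)) is modelled by a finite type U (the
   ground set, playing the role of U) and a family A : 'I_m -> {set U};
   the ordinal k : 'I_m stands for the index k+1 of [m]. *)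

Definition HI (U : finType) (m : nat) (A : 'I_m -> {set U}) (I : {set 'I_m})
  : {set U} := \bigcap_(i in I) A i.

(* lengths of the maximal blocks of [true]s in a boolean sequence, with
   the current block length [cur] accumulated (zero lengths included). *)
Fixpoint runs_aux (cur : nat) (s : seq bool) : seq nat :=
  match s with
  | [::] => [:: cur]
  | b :: s' => if b then runs_aux cur.+1 s' else cur :: runs_aux 0 s'
  end.

Definition run_lengths (s : seq bool) : seq nat :=
  [seq n <- runs_aux 0 s | 0 < n].

Definition run_decomposition (m : nat) (I : {set 'I_m}) : seq nat :=
  sort geq (run_lengths [seq i \in I | i <- enum 'I_m]).

Definition harmonic (U : finType) (m : nat) (A : 'I_m -> {set U}) : Prop :=
  forall I J : {set 'I_m},
    run_decomposition I = run_decomposition J -> #|HI A I| = #|HI A J|.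

From mathcomp Require Import all_boot zify.

Set Implicit Arguments.
Unset Strict Implicit.
Unset Printing Implicit Defensive.

(* Harmonicity forces all |A_k| to be equal, all |A_k ∩ A_(k+1)| to be equal
   (run decomposition (2)), and all |A_k ∩ A_l| with l >= k + 2 to be equal
   (run decomposition (1,1)).  If A_i = A_j, the common value for the pairs
   of the same kind as (i, j) is |A_i|, so every such pair consists of equal
   sets.  Adjacent pairs link all of [m]; non-adjacent pairs link all of [m]
   as soon as m >= 4, and for m = 3 the only non-adjacent pair is (1, 3). *)

Lemma runs_aux_cat_false c s t :
  runs_aux c (s ++ false :: t) = runs_aux c s ++ runs_aux 0 t.
Proof. by elim: s c => [|[] s IHs] c //=; rewrite IHs. Qed.

Lemma run_lengths_cat_false s t :
  run_lengths (s ++ false :: t) = run_lengths s ++ run_lengths t.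
Proof. by rewrite /run_lengths runs_aux_cat_false filter_cat. Qed.

Lemma run_lengths_ncons_false n s :
  run_lengths (ncons n false s) = run_lengths s.
Proof. by elim: n. Qed.

Lemma run_lengths_cat_nseq_false s n :
  run_lengths (s ++ nseq n false) = run_lengths s.
Proof.
case: n => [|n]; first by rewrite cats0.
by rewrite run_lengths_cat_false run_lengths_ncons_false cats0.
Qed.

Lemma nth_ncons_false n s k :
  nth false (ncons n false s) k = (n <= k) && nth false s (k - n).
Proof. by rewrite nth_ncons; case: ltnP. Qed.

Lemma indicator_enum_ord m (I : {set 'I_m}) (t : seq bool) :
  size t <= m -> (forall x : 'I_m, (x \in I) = nth false t x) ->
  [seq x \in I | x <- enum 'I_m] = t ++ nseq (m - size t) false.
Proof.
move=> le_t_m memI; apply: (@eq_from_nth _ false).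
  by rewrite size_map size_enum_ord size_cat size_nseq subnKC.
rewrite size_map size_enum_ord => k lt_k_m.
pose x := Ordinal lt_k_m.
rewrite (nth_map x) ?size_enum_ord // -[k]/(nat_of_ord x) nth_ord_enum memI /=.
rewrite nth_cat nth_nseq if_same; case: ltnP => // le_t_k.
by rewrite nth_default.
Qed.

Lemma run_decomposition_indicator m (I : {set 'I_m}) (t : seq bool) :
  size t <= m -> (forall x : 'I_m, (x \in I) = nth false t x) ->
  run_decomposition I = sort geq (run_lengths t).
Proof.
move=> le_t_m memI.
by rewrite /run_decomposition (indicator_enum_ord le_t_m memI)
  run_lengths_cat_nseq_false.
Qed.

Lemma run_decomposition_set1 m (k : 'I_m) : run_decomposition [set k] = [:: 1].
Proof.
rewrite (@run_decomposition_indicator _ _ (ncons k false [:: true])).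
- by rewrite run_lengths_ncons_false.
- by rewrite size_ncons addn1 ltn_ord.
- move=> x; rewrite in_set1 -val_eqE nth_ncons_false.
  by case def_y: (x - k) => [|[|y]] /=; lia.
Qed.

Lemma run_decomposition_set2 m (k l : 'I_m) : k < l ->
  run_decomposition [set k; l] = if l == k.+1 :> nat then [:: 2] else [:: 1; 1].
Proof.
move=> lt_kl; have [d def_l] : exists d, nat_of_ord l = k + d.+1.
  by exists (l - k.+1); lia.
rewrite (@run_decomposition_indicator _ _
  (ncons k false (true :: ncons d false [:: true]))).
- rewrite run_lengths_ncons_false; case: d def_l => [|d] def_l.
    by rewrite ifT //; lia.
  rewrite ifF; last by lia.
  by rewrite -cat1s run_lengths_cat_false run_lengths_ncons_false.
- by rewrite size_ncons /= size_ncons /=; have := ltn_ord l; lia.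
- move=> x; rewrite in_set2 -!val_eqE nth_ncons_false.
  case def_y: (x - k) => [|y] /=; first by lia.
  by rewrite nth_ncons_false; case def_z: (y - d) => [|[|z]] /=; lia.
Qed.

Lemma HI_set1 U m (A : 'I_m -> {set U}) (k : 'I_m) : HI A [set k] = A k.
Proof. by rewrite /HI big_set1. Qed.

Lemma HI_set2 U m (A : 'I_m -> {set U}) (k l : 'I_m) : k != l ->
  HI A [set k; l] = A k :&: A l.
Proof. by move=> neq_kl; rewrite /HI big_setU1 ?big_set1 // in_set1. Qed.

Lemma eq_set_of_card_setI (T : finType) (B C : {set T}) :
  #|B :&: C| = #|B| -> #|C| = #|B| -> B = C.
Proof.
move=> cardBC cardC; have sub_BC : B \subset C.
  by apply/setIidPl/eqP; rewrite eqEcard subsetIl cardBC leqnn.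
by apply/eqP; rewrite eqEcard sub_BC cardC leqnn.
Qed.

Lemma eq_all_of_eq_succ (T : Type) m (f : 'I_m -> T) :
  (forall k l : 'I_m, l = k.+1 :> nat -> f k = f l) -> forall k l, f k = f l.
Proof.
case: m f => [|m] f f_succ k l; first by case: k.
have f_inord0 n : n < m.+1 -> f (inord n) = f (inord 0).
  elim: n => [|n IHn] lt_n_m //.
  by rewrite -IHn 1?ltnW //; symmetry; apply: f_succ; rewrite !inordK // ltnW.
by rewrite -(inord_val k) -(inord_val l) !f_inord0.
Qed.

Lemma eq_all_of_eq_far (T : Type) m (f : 'I_m -> T) : 3 < m ->
  (forall k l : 'I_m, k.+1 < l -> f k = f l) -> forall k l, f k = f l.
Proof.
case: m f => [|[|[|[|m]]]] // f _ f_far.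
suff f_ord0 k : f k = f ord0 by move=> k l; rewrite !f_ord0.
case: k => [[|[|n]] ?]; first by congr f; apply: val_inj.
  by rewrite (f_far _ (inord 3)) ?inordK // (f_far ord0 (inord 3)) ?inordK.
by symmetry; apply: f_far.
Qed.

Section HarmonicSetSystem.

Variables (U : finType) (m : nat) (A : 'I_m -> {set U}).
Hypothesis harmonicA : harmonic A.

Lemma harmonic_card (k l : 'I_m) : #|A k| = #|A l|.
Proof.
move: (@harmonicA [set k] [set l]); rewrite !HI_set1; apply.
by rewrite !run_decomposition_set1.
Qed.

Lemma harmonic_card_setI (k l k' l' : 'I_m) : k < l -> k' < l' ->
  (l == k.+1 :> nat) = (l' == k'.+1 :> nat) ->
  #|A k :&: A l| = #|A k' :&: A l'|.
Proof.
move=> lt_kl lt_kl' same_gap.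
move: (@harmonicA [set k; l] [set k'; l']).
rewrite !HI_set2 -?val_eqE ?ltn_eqF //; apply.
by rewrite !run_decomposition_set2 // same_gap.
Qed.

Lemma harmonic_eq_same_gap (i j k l : 'I_m) : i < j -> A i = A j ->
  k < l -> (l == k.+1 :> nat) = (j == i.+1 :> nat) -> A k = A l.
Proof.
move=> lt_ij Aij lt_kl same_gap; apply: eq_set_of_card_setI.
  rewrite (harmonic_card_setI lt_kl lt_ij) // -Aij setIid.
  exact: harmonic_card.
exact: harmonic_card.
Qed.

End HarmonicSetSystem.

Theorem proposition5p1 (U : finType) (m : nat) (A : 'I_m -> {set U})
    (i j : 'I_m) :
  harmonic A -> i < j -> A i = A j ->
  (forall k l : 'I_m, A k = A l) \/
  (m = 3 /\ nat_of_ord i = 0 /\ nat_of_ord j = 2).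
Proof.
move=> harmonicA lt_ij Aij.
have same_gap := harmonic_eq_same_gap harmonicA lt_ij Aij.
have [adj_ij|far_ij] := eqVneq (nat_of_ord j) i.+1.
  left; apply: eq_all_of_eq_succ => k l def_l.
  by apply: same_gap; rewrite def_l ?adj_ij ?eqxx.
have lt_j_m := ltn_ord j.
have [m3|m4] : m = 3 \/ 3 < m by lia.
  by right; lia.
left; apply: eq_all_of_eq_far => // k l lt_kl.
by apply: same_gap; rewrite ?(negbTE far_ij); lia.
Qed.
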